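(* Let $r\ge2$, $n\ge2r$, and let $H\subseteq\binom{\Omega_n}{r}$ be $M_1^{(r)}$-saturated. Then there exist $\ell\ge1$ and distinct vertices $w_1,\dots,w_{2\ell+1}\in\Omega_n$ with $w_1<w_3<w_5<\dots<w_{2\ell+1}<w_2<w_4<\dots<w_{2\ell}<w_1$ (clockwise cyclic order) such that $\lambda(w_i)=w_{i+1}$ and $\rho(w_i)=w_{i-1}$ for all $i$, with indices taken mod $2\ell+1$.
   Context: $\Omega_n=\{v_0,\dots,v_{n-1}\}$ with cyclic order $v_0<\dots<v_{n-1}<v_0$, indices mod $n$. For distinct vertices $u,w$, $(u,w)$ is the set of vertices strictly between $u$ and $w$ moving clockwise from $u$ to $w$ and $[u,w]=(u,w)\cup\{u,w\}$. An $r$-cgh $H\subseteq\binom{\Omega_n}{r}$ is $M_1^{(r)}$-saturated if there are no edges $h_1,h_2\in H$ and vertices $u\neq u'$ with $h_1\subseteq[u,u']$ and $h_2\cap[u,u']=\emptyset$, but for every $e\in\binom{\Omega_n}{r}\setminus H$ such a pair exists in $H\cup\{e\}$. In such $H$ every vertex lies in an edge. $\lambda(v_i)$ is the vertex $u$ such that some $h\in H$ with $v_i\in h$ satisfies $h\subseteq[u,v_i]$, while no $h\in H$ with $v_i\in h$ satisfies $h\subseteq[u',v_i]$, $u'$ the clockwise successor of $u$. $\rho(v_i)$ is the vertex $u$ such that some $h\in H$ with $v_i\in h$ satisfies $h\subseteq[v_i,u]$ but none with $h\subseteq[v_i,u'']$, $u''$ the clockwise predecessor of $u$. *)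

From mathcomp Require Import all_boot.
Set Implicit Arguments. Unset Strict Implicit. Unset Printing Implicit Defensive.

(* Omega_n is 'I_n; clockwise successor of v_i is v_{i+1 mod n}. *)

(* Closed clockwise interval [u,w] = {u, u+1, ..., w} (indices mod n). *)
Definition cint (n : nat) (u w : 'I_n) : {set 'I_n} :=
  [set x : 'I_n | (x + n - u) %% n <= (w + n - u) %% n].

Definition csucc (n : nat) (u : 'I_n) : 'I_n := ordS u.
Definition cpred (n : nat) (u : 'I_n) : 'I_n := ord_pred u.

(* H contains a copy of M_1: h1 inside [u,u'], h2 disjoint from [u,u'] *)
Definition has_M1 (n : nat) (H : {set {set 'I_n}}) : Prop :=
  exists h1 h2 (u u' : 'I_n),
    [/\ h1 \in H, h2 \in H, u != u', h1 \subset cint u u'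
      & [disjoint h2 & cint u u']].

Definition M1_saturated (n r : nat) (H : {set {set 'I_n}}) : Prop :=
  ~ has_M1 H /\
  forall e : {set 'I_n}, #|e| = r -> e \notin H -> has_M1 (e |: H).

Definition is_lambda (n : nat) (H : {set {set 'I_n}}) (v u : 'I_n) : bool :=
  [exists h in H, (v \in h) && (h \subset cint u v)] &&
  ~~ [exists h in H, (v \in h) && (h \subset cint (csucc u) v)].

Definition is_rho (n : nat) (H : {set {set 'I_n}}) (v u : 'I_n) : bool :=
  [exists h in H, (v \in h) && (h \subset cint v u)] &&
  ~~ [exists h in H, (v \in h) && (h \subset cint v (cpred u))].

Definition lam (n : nat) (H : {set {set 'I_n}}) (v : 'I_n) : 'I_n :=
  odflt v [pick u | is_lambda H v u ].
Definition rho (n : nat) (H : {set {set 'I_n}}) (v : 'I_n) : 'I_n :=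
  odflt v [pick u | is_rho H v u ].

Definition cyc_ordered (n : nat) (s : seq 'I_n) : Prop :=
  exists k, sorted ltn (map val (rot k s)).

(* for w : 'I_(2l+1) -> 'I_n (w_1..w_{2l+1} of the paper are w 0 .. w 2l),
   the sequence w_1, w_3, ..., w_{2l+1}, w_2, w_4, ..., w_{2l} *)
Definition odd_even_seq (n l : nat) (w : 'I_(2 * l).+1 -> 'I_n) : seq 'I_n :=
  [seq w (inord (2 * j)) | j <- iota 0 l.+1] ++
  [seq w (inord (2 * j + 1)) | j <- iota 0 l].

(* For a vertex [a], [reach a] is the length of the shortest arc starting at
   [a] that contains an edge.  Absence of M_1 together with saturation shows
   that exactly one of an arc and its complement contains an edge; this gives
   the duality [reach a <= k <-> n - k < reach (a + k)] and the formulas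
   [rho v = v + reach v - 1] and [lam v = v + reach (v + 1)].
   The pivots are the vertices [c] with [reach c <= reach (c + 1)].  [lam]
   maps pivots to pivots, [rho] undoes [lam] on them, and [lam (lam c)] is the
   next pivot clockwise after [c].  On the ranks of the pivots (listed in
   increasing order) [lam] is thus a square root of the rotation by one, which
   forces [2l+1] pivots with [lam] advancing ranks by [l+1]; the pivot of rank
   [i(l+1) mod (2l+1)] is the vertex w_(i+1) of the statement. *)

From mathcomp Require Import all_boot zify.
Set Implicit Arguments. Unset Strict Implicit. Unset Printing Implicit Defensive.

Ltac case_ifs := repeat match goal with |- context [if ?b then _ else _] =>
  lazymatch b with context [if _ then _ else _] => fail | _ =>
  let E := fresh "E" in case: (boolP b) => E end end.

Section CyclicArithmetic.

Variable n' : nat.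
Local Notation n := n'.+1.

Definition dist (a x : 'I_n) : nat := (x + n - a) %% n.

Definition shift (x : 'I_n) (k : nat) : 'I_n :=
  Ordinal (ltn_pmod (x + k) (ltn0Sn n')).

Definition carc (a : 'I_n) (k : nat) : {set 'I_n} := [set x | dist a x < k].

Lemma distE a x : dist a x = if a <= x then x - a else n + x - a.
Proof.
have ha := ltn_ord a; have hx := ltn_ord x.
rewrite /dist; case: (leqP a x) => h.
- rewrite -addnBAC // modnDr modn_small //; lia.
- rewrite modn_small; lia.
Qed.

Lemma dist_lt a x : dist a x < n.
Proof. by rewrite /dist ltn_pmod. Qed.

Lemma dist_rebase z x y :
  dist x y = if dist z x <= dist z y then dist z y - dist z x
             else n + dist z y - dist z x.
Proof.
have := ltn_ord z; have := ltn_ord x; have := ltn_ord y.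
rewrite !distE => *; case_ifs; lia.
Qed.

Lemma dist_self a : dist a a = 0.
Proof. by rewrite distE leqnn subnn. Qed.

Lemma dist_eq0 a x : (dist a x == 0) = (a == x).
Proof.
have := ltn_ord a; have := ltn_ord x.
rewrite distE; case: (eqVneq a x) => [->|]; first by rewrite leqnn subnn.
move=> ne ? ?; have ne' : (a : nat) != x by [].
move: ne'; case_ifs; move=> ne'; apply/eqP; lia.
Qed.

Lemma dist_inj a : injective (dist a).
Proof.
move=> x y; have := ltn_ord a; have := ltn_ord x; have := ltn_ord y.
rewrite !distE => ? ? ?; case_ifs; move=> *; apply: ord_inj; lia.
Qed.

Lemma shiftD x i j : shift (shift x i) j = shift x (i + j).
Proof. by apply: val_inj; rewrite /= modnDml addnA. Qed.

Lemma shift_n x : shift x n = x.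
Proof. by apply: val_inj; rewrite /= modnDr modn_small. Qed.

Lemma shift0 x : shift x 0 = x.
Proof. by apply: val_inj; rewrite /= addn0 modn_small. Qed.

Lemma dist_shift z x k : k <= n ->
  dist z (shift x k) = if dist z x + k < n then dist z x + k else dist z x + k - n.
Proof.
move=> kn; have hz := ltn_ord z; have hx := ltn_ord x.
have E : val (shift x k) = if x + k < n then x + k else x + k - n.
  rewrite /=; case: ltnP => h; first by rewrite modn_small.
  rewrite -(subnK h) modnDr modn_small //; lia.
rewrite !distE E; case_ifs; lia.
Qed.

Lemma dist_shift_self x k : k < n -> dist x (shift x k) = k.
Proof.
move=> kn; rewrite dist_shift ?dist_self ?add0n ?kn //; exact: ltnW.
Qed.

Lemma shift_dist c y : shift c (dist c y) = y.
Proof. by apply: (@dist_inj c); rewrite dist_shift_self // dist_lt. Qed.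

Lemma csuccE x : csucc x = shift x 1.
Proof. by apply: val_inj; rewrite /= addn1. Qed.

Lemma cpredE x : cpred x = shift x n'.
Proof. by apply: val_inj; rewrite /= addnS. Qed.

Lemma cintE u u' : cint u u' = [set x | dist u x <= dist u u'].
Proof. by []. Qed.

Lemma dist_succ_self v : dist (shift v 1) v = n'.
Proof.
case: (posnP n') => [n0|npos].
  by have := dist_lt (shift v 1) v; rewrite n0; lia.
rewrite (dist_rebase v (shift v 1) v) dist_self dist_shift_self //; case_ifs; lia.
Qed.

Lemma cint_from_succ u v : cint u v = [set x | dist (shift v 1) u <= dist (shift v 1) x].
Proof.
apply/setP => x; rewrite cintE !inE (dist_rebase (shift v 1) u x).
rewrite (dist_rebase (shift v 1) u v) dist_succ_self.
have := dist_lt (shift v 1) x; have := dist_lt (shift v 1) u; case_ifs; lia.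
Qed.

Lemma card_arc a k : k <= n -> #|carc a k| = k.
Proof.
move=> kn; pose f (x : 'I_n) := shift ord0 (dist a x).
have finj : injective f.
  by move=> x y /(congr1 val) /=; rewrite !add0n !modn_small ?dist_lt // => /dist_inj.
have -> : carc a k = f @^-1: [set i : 'I_n | i < k].
  by apply/setP => x; rewrite !inE /= add0n modn_small ?dist_lt.
rewrite card_preimset //.
have -> : [set i : 'I_n | i < k] = widen_ord kn @: [set: 'I_k].
  apply/setP => i; rewrite inE; apply/idP/imsetP => [ik|[j _ ->]]; last exact: ltn_ord j.
  by exists (Ordinal ik) => //; apply: ord_inj.
by rewrite card_imset ?cardsT ?card_ord // => x y /(congr1 val) /= /ord_inj.
Qed.

Lemma arc_compl a k : k <= n -> [set x | k <= dist a x] = carc (shift a k) (n - k).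
Proof.
move=> kn; apply/setP => x; rewrite !inE (dist_rebase a (shift a k) x).
rewrite (dist_shift a a kn) dist_self add0n.
have := dist_lt a x; case_ifs; lia.
Qed.

Lemma arc_compl_back a k : k <= n -> [set x | n - k <= dist (shift a k) x] = carc a k.
Proof.
move=> kn; apply/setP => x; rewrite !inE (dist_rebase a (shift a k) x).
rewrite (dist_shift a a kn) dist_self add0n.
have := dist_lt a x; case_ifs; lia.
Qed.

Lemma outside_between u u' a b :
  a \in cint u u' -> b \in cint u u' -> a != b ->
  (forall x, x \notin cint u u' -> 0 < dist a x < dist a b) \/
  (forall x, x \notin cint u u' -> dist a b < dist a x).
Proof.
rewrite !cintE !inE => ha hb ne.
have hne : dist u a != dist u b by apply: contra ne => /eqP /dist_inj ->.
case: (leqP (dist u a) (dist u b)) => hab; [right|left] => x;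
  rewrite inE -ltnNge => hx; rewrite (dist_rebase u a x) (dist_rebase u a b);
  have := dist_lt u x; have := dist_lt u b; have := dist_lt u a; case_ifs; lia.
Qed.

Lemma inside_between u u' a b :
  a \notin cint u u' -> b \notin cint u u' -> a != b ->
  (forall x, x \in cint u u' -> 0 < dist a x < dist a b) \/
  (forall x, x \in cint u u' -> dist a b < dist a x).
Proof.
rewrite !cintE !inE -!ltnNge => ha hb ne.
have hne : dist u a != dist u b by apply: contra ne => /eqP /dist_inj ->.
case: (leqP (dist u a) (dist u b)) => hab; [right|left] => x;
  rewrite inE => hx; rewrite (dist_rebase u a x) (dist_rebase u a b);
  have := dist_lt u x; have := dist_lt u b; have := dist_lt u a; case_ifs; lia.
Qed.

End CyclicArithmetic.

Section CyclicEnumeration.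

Variable n' : nat.
Local Notation n := n'.+1.
Variable P : {set 'I_n}.

Definition pvals : seq nat := [seq x <- iota 0 n | inord x \in P].
Definition npts : nat := size pvals.

Definition pt (k : nat) : 'I_n := inord (nth 0 pvals k).
Definition rank (c : 'I_n) : nat := index (c : nat) pvals.

Lemma pvals_sorted : sorted ltn pvals.
Proof. exact: (sorted_filter ltn_trans _ (iota_ltn_sorted 0 n)). Qed.

Lemma pvals_uniq : uniq pvals.
Proof. exact: (sorted_uniq ltn_trans ltnn pvals_sorted). Qed.

Lemma mem_pvals x : (x \in pvals) = (x < n) && (inord x \in P).
Proof. by rewrite mem_filter mem_iota add0n andbC. Qed.

Lemma mem_pvals_ord (c : 'I_n) : ((c : nat) \in pvals) = (c \in P).
Proof. by rewrite mem_pvals ltn_ord inord_val. Qed.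

Lemma nth_pvals_lt k : k < npts -> nth 0 pvals k < n.
Proof. by move=> km; have := mem_nth 0 km; rewrite mem_pvals => /andP []. Qed.

Lemma pt_in k : k < npts -> pt k \in P.
Proof. by move=> km; have := mem_nth 0 km; rewrite mem_pvals => /andP []. Qed.

Lemma val_pt k : k < npts -> (pt k : nat) = nth 0 pvals k.
Proof. by move=> km; rewrite inordK // nth_pvals_lt. Qed.

Lemma rank_lt c : c \in P -> rank c < npts.
Proof. by move=> cP; rewrite /rank index_mem mem_pvals_ord. Qed.

Lemma pt_rank c : c \in P -> pt (rank c) = c.
Proof. by move=> cP; rewrite /pt /rank nth_index ?mem_pvals_ord // inord_val. Qed.

Lemma rank_pt k : k < npts -> rank (pt k) = k.
Proof. by move=> km; rewrite /rank val_pt // index_uniq // pvals_uniq. Qed.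

Lemma pvals_lt i j : i < j -> j < npts -> nth 0 pvals i < nth 0 pvals j.
Proof.
move=> ij jm; apply: (sorted_ltn_nth ltn_trans 0 pvals_sorted); rewrite ?inE //.
exact: ltn_trans ij jm.
Qed.

Lemma rank_next c t : c \in P -> t \in P -> t != c ->
  (forall y, y \in P -> ~~ (0 < dist c y < dist c t)) ->
  rank t = (rank c).+1 %% npts.
Proof.
move=> cP tP tc no_between.
have c_lt := rank_lt cP; have t_lt := rank_lt tP.
have c_nth : nth 0 pvals (rank c) = c by rewrite -val_pt ?pt_rank.
have t_nth : nth 0 pvals (rank t) = t by rewrite -val_pt ?pt_rank.
have not_between k : k < npts -> ~~ (0 < dist c (pt k) < dist c t).
  by move=> km; apply: no_between; apply: pt_in.
have dist_pt k : k < npts -> dist c (pt k) =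
    if c <= nth 0 pvals k then nth 0 pvals k - c else n + nth 0 pvals k - c.
  by move=> km; rewrite distE val_pt.
have dist_t : dist c t = if (c : nat) <= t then t - c else n + t - c by rewrite distE.
have ranks_ne : rank c != rank t.
  by apply: contra tc => /eqP E1; rewrite -(pt_rank tP) -E1 pt_rank.
case: (ltngtP (rank c) (rank t)) ranks_ne => // hij _.
(* In each case other than the claimed one, the element following [c] in
   increasing order (cyclically) would lie strictly between [c] and [t]. *)
- case: (ltnP (rank c).+1 (rank t)) => h.
  + have h' : (rank c).+1 < npts by lia.
    have := not_between _ h'; rewrite dist_pt // dist_t.
    have := @pvals_lt (rank c) (rank c).+1 (ltnSn _) h'.
    have := @pvals_lt (rank c).+1 (rank t) h t_lt.
    rewrite c_nth t_nth; case_ifs; lia.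
  + have e1 : rank t = (rank c).+1 by lia.
    by rewrite e1 modn_small // -e1.
- case: (ltnP (rank c).+1 npts) => h.
  + have := not_between _ h; rewrite dist_pt // dist_t.
    have := @pvals_lt (rank c) (rank c).+1 (ltnSn _) h.
    have := @pvals_lt (rank t) (rank c) hij c_lt.
    have := nth_pvals_lt h.
    rewrite c_nth t_nth; case_ifs; lia.
  + have e1 : (rank c).+1 = npts by lia.
    rewrite e1 modnn; case: (posnP (rank t)) => // h0.
    have m0 : 0 < npts by lia.
    have := not_between _ m0; rewrite dist_pt // dist_t.
    have := @pvals_lt 0 (rank t) h0 t_lt.
    have := @pvals_lt (rank t) (rank c) hij c_lt.
    rewrite c_nth t_nth; have := ltn_ord c; case_ifs; lia.
Qed.

Definition stride (l : nat) (i : 'I_(2 * l).+1) : 'I_n := pt ((i * l.+1) %% npts).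

Section OddSize.

Variable l : nat.
Hypothesis npts_odd : npts = (2 * l).+1.

Lemma stride_inj : injective (@stride l).
Proof.
have m0 : 0 < npts by lia.
move=> i j /(congr1 rank); rewrite !rank_pt ?ltn_pmod // => eq; apply: ord_inj.
have : (i * l.+1 * 2) %% npts = (j * l.+1 * 2) %% npts by rewrite -modnMml eq modnMml.
rewrite -!mulnA (_ : l.+1 * 2 = npts + 1); last by lia.
by rewrite !mulnDr !muln1 !modnMDl !modn_small // npts_odd.
Qed.

(* Stride [l+1] in a cycle of length [2l+1] is the "square root" of the
   rotation by one: a map shifting ranks by [l+1] steps along [stride]. *)
Lemma stride_step (f : 'I_n -> 'I_n) :
  (forall q, q < npts -> f (pt q) = pt ((l.+1 + q) %% npts)) ->
  forall i : 'I_(2 * l).+1, f (stride i) = stride (ordS i).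
Proof.
move=> fE i; have m0 : 0 < npts by lia.
rewrite /stride fE ?ltn_pmod //; congr pt.
have e : i.+1 %% (2 * l).+1 = i.+1 %% npts by rewrite npts_odd.
by rewrite /= e modnDmr modnMml (mulSn i l.+1).
Qed.

Lemma odd_even_stride : map val (odd_even_seq (@stride l)) = pvals.
Proof.
rewrite -(mkseq_nth 0 pvals) /mkseq -/npts npts_odd.
rewrite (_ : (2 * l).+1 = l.+1 + l); last by lia.
rewrite iotaD add0n -{2}(addn0 l.+1) iotaDl /odd_even_seq !map_cat -!map_comp.
congr (_ ++ _); apply/eq_in_map => j; rewrite mem_iota => /andP [_ jl] /=.
- rewrite /stride inordK; last by lia.
  rewrite (_ : 2 * j * l.+1 = j * npts + j); last by rewrite npts_odd; lia.
  rewrite modnMDl (@modn_small j) ?val_pt //; lia.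
- rewrite /stride inordK; last by lia.
  rewrite (_ : (2 * j + 1) * l.+1 = j * npts + (l.+1 + j)); last by rewrite npts_odd; lia.
  rewrite modnMDl (@modn_small (l.+1 + j)) ?val_pt //; lia.
Qed.

End OddSize.

End CyclicEnumeration.

Lemma rotation_square_root (m : nat) (p : nat -> nat) : 1 < m ->
  (forall k, k < m -> p k < m) ->
  (forall k, k < m -> p (p k) = k.+1 %% m) ->
  exists2 l, m = (2 * l).+1 & forall k, k < m -> p k = (l.+1 + k) %% m.
Proof.
move=> m1 p_lt p_sq.
have m0 : 0 < m by lia.
have p_lin k : k < m -> p k = (p 0 + k) %% m.
  elim: k => [|k IH] km; first by rewrite addn0 modn_small // p_lt.
  have km' : k < m by lia.
  have e1 : p (p k) = k.+1 by rewrite p_sq ?modn_small.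
  rewrite -{1}e1 p_sq ?p_lt ?IH //.
  by rewrite addnS -addn1 modnDml addn1.
have p0m := p_lt 0 m0.
have h2 : 1 = (p 0 + p 0) %% m by rewrite -p_lin // p_sq // modn_small.
have hpp : p 0 + p 0 = m.+1.
  case: (ltnP (p 0 + p 0) m) => h; first by rewrite modn_small // in h2; lia.
  move: h2; rewrite -{1}(subnK h) modnDr modn_small; lia.
exists (p 0).-1; first by lia.
by move=> k km; rewrite p_lin // (_ : (p 0).-1.+1 = p 0) //; lia.
Qed.

Section SaturatedHypergraph.

Variable n' : nat.
Local Notation n := n'.+1.
Variables (r : nat) (H : {set {set 'I_n}}).
Hypothesis r_ge2 : 2 <= r.
Hypothesis n_ge2r : 2 * r <= n.
Hypothesis edge_card : forall h, h \in H -> #|h| = r.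
Hypothesis saturated : M1_saturated r H.

Definition free (A : {set 'I_n}) : bool := [forall h in H, ~~ (h \subset A)].

Lemma freeP (A : {set 'I_n}) :
  reflect (forall h, h \in H -> ~~ (h \subset A)) (free A).
Proof. exact: (iffP forall_inP). Qed.

Lemma nfreeP (A : {set 'I_n}) :
  reflect (exists2 h, h \in H & h \subset A) (~~ free A).
Proof.
apply: (iffP idP).
- by move/forall_inPn => [h hH]; rewrite negbK => hA; exists h.
- by move=> [h hH hA]; apply/forall_inPn; exists h; rewrite ?negbK.
Qed.

Lemma free_edge h (A : {set 'I_n}) : h \in H -> free A -> h \subset A -> False.
Proof. by move=> hH /freeP /(_ h hH) /negP. Qed.

Lemma free_sub (A B : {set 'I_n}) : A \subset B -> free B -> free A.
Proof.
move=> AB /freeP fB; apply/freeP => h hH; apply/negP => hA.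
by move: (fB h hH); rewrite (subset_trans hA AB).
Qed.

Lemma edge_card_le h (A : {set 'I_n}) : h \in H -> h \subset A -> r <= #|A|.
Proof. by move=> hH hA; rewrite -(edge_card hH) subset_leq_card. Qed.

(* [H] has no copy of M_1: an edge inside a closed interval forces every other
   edge to meet it (for [u = u'] the interval is a point, too small for an edge). *)
Lemma interval_edge_meets h1 h2 u u' : h1 \in H -> h2 \in H ->
  h1 \subset cint u u' -> ~~ [disjoint h2 & cint u u'].
Proof.
move=> h1H h2H sub; apply/negP => dis.
case: (eqVneq u u') => [eu|ne].
- subst; have := edge_card_le h1H sub.
  have -> : cint u' u' = [set u'].
    by apply/setP => x; rewrite cintE !inE dist_self leqn0 dist_eq0 eq_sym.
  rewrite cards1; lia.
- by apply: saturated.1; exists h1, h2, u, u'.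
Qed.

(* The witness is [b] together with the
   first [r-1] vertices from [a]: adding it would create an M_1, which is
   impossible by the freeness of the two open arcs. *)
Lemma saturation_edge a b : a != b -> r <= (dist a b).+1 ->
  free [set x | 0 < dist a x < dist a b] -> free [set x | dist a b < dist a x] ->
  exists2 e, e \in H &
    [/\ a \in e, b \in e & e \subset [set x | dist a x <= dist a b]].
Proof.
move=> ne rab F1 F2.
set e := b |: carc a r.-1.
have bnot : b \notin carc a r.-1 by rewrite inE -leqNgt; lia.
have ecard : #|e| = r by rewrite cardsU1 bnot card_arc /=; lia.
have ae : a \in e by rewrite !inE dist_self; apply/orP; right; lia.
have be : b \in e by rewrite !inE eqxx.
have esub : e \subset [set x | dist a x <= dist a b].
  by apply/subsetP => x; rewrite !inE => /orP [/eqP ->|]; lia.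
case: (boolP (e \in H)) => eH; first by exists e.
exfalso; have [h1 [h2 [u [u' [h1in h2in _ sub dis]]]]] := saturated.2 e ecard eH.
have outside x : x \in h2 -> x \notin cint u u'.
  by move=> xh; move: dis; rewrite disjoint_subset => /subsetP /(_ x xh); rewrite inE.
have free_arcs g : g \in H ->
    ((forall x, x \in g -> 0 < dist a x < dist a b) \/
     (forall x, x \in g -> dist a b < dist a x)) -> False.
  move=> gH [] hg; [apply: (free_edge gH F1) | apply: (free_edge gH F2)];
  by apply/subsetP => x xg; rewrite inE hg.
rewrite !in_setU1 in h1in h2in.
case/orP: h1in => [/eqP E1|h1H]; case/orP: h2in => [/eqP E2|h2H].
- by subst h1 h2; move: (outside a ae); rewrite (subsetP sub a ae).
- subst h1; apply: (free_arcs h2 h2H).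
  case: (outside_between (subsetP sub a ae) (subsetP sub b be) ne) => hh;
  [left|right] => x xh; exact: hh (outside x xh).
- subst h2; apply: (free_arcs h1 h1H).
  case: (inside_between (outside a ae) (outside b be) ne) => hh;
  [left|right] => x xh; exact: hh (subsetP sub x xh).
- by move: (interval_edge_meets h1H h2H sub); rewrite dis.
Qed.

Lemma edges_exist : exists h, h \in H.
Proof.
pose e : {set 'I_n} := carc ord0 r.
have ecard : #|e| = r by rewrite card_arc //; lia.
case: (boolP (e \in H)) => eH; first by exists e.
have [h1 [h2 [u [u' [h1in h2in _ sub dis]]]]] := saturated.2 e ecard eH.
rewrite !in_setU1 in h1in h2in.
case/orP: h1in => [/eqP E1|h1H]; last by exists h1.
case/orP: h2in => [/eqP E2|h2H]; last by exists h2.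
subst h1 h2; have ae : ord0 \in e by rewrite inE dist_self; lia.
exfalso; move: dis; rewrite disjoint_subset => /subsetP /(_ _ ae).
by rewrite inE (subsetP sub _ ae).
Qed.

Lemma arc_full_nfree a : ~~ free (carc a n).
Proof.
have [h hH] := edges_exist; apply/nfreeP; exists h => //.
by apply/subsetP => x _; rewrite inE dist_lt.
Qed.

Definition reach (a : 'I_n) : nat :=
  ex_minn (ex_intro (fun k => ~~ free (carc a k)) n (arc_full_nfree a)).

Lemma reach_leP a k : (reach a <= k) = ~~ free (carc a k).
Proof.
rewrite /reach; case: ex_minnP => m Hm Hmin.
apply/idP/idP => [mk|/Hmin //].
move: Hm; apply: contra => F; apply: (free_sub _ F).
by apply/subsetP => x; rewrite !inE => ?; lia.
Qed.

Lemma reach_le_n a : reach a <= n.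
Proof. by rewrite reach_leP arc_full_nfree. Qed.

Lemma reach_ge a : r <= reach a.
Proof.
have := reach_leP a (reach a); rewrite leqnn => /esym /nfreeP [h hH hsub].
by have := edge_card_le hH hsub; rewrite card_arc ?reach_le_n.
Qed.

Lemma arc_free a k : k < reach a -> free (carc a k).
Proof. by move=> h; apply/negPn; rewrite -reach_leP -ltnNge. Qed.

Lemma arc_reach_nfree a : ~~ free (carc a (reach a)).
Proof. by rewrite -reach_leP. Qed.

(* The complement of a non-free arc is free (no M_1). *)
Lemma compl_free a k : k <= n -> ~~ free (carc a k) -> free [set x | k <= dist a x].
Proof.
move=> kn /nfreeP [h1 h1H h1sub]; apply/freeP => h2 h2H; apply/negP => h2sub.
have k1 : 0 < k by have := edge_card_le h1H h1sub; rewrite card_arc //; lia.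
have k1n : k.-1 < n by lia.
have sub1 : h1 \subset cint a (shift a k.-1).
  apply/subsetP => x xh; rewrite cintE inE dist_shift_self //.
  by have := subsetP h1sub x xh; rewrite inE; lia.
have := interval_edge_meets h1H h2H sub1; rewrite disjoint_subset; apply/negP/negPn.
apply/subsetP => x xh; have := subsetP h2sub x xh.
by rewrite cintE !inE dist_shift_self //; lia.
Qed.

(* An arc of at least [r] vertices and its complement cannot both be free
   (saturation applied to the two ends of the arc). *)
Lemma arc_or_compl_nfree a k : k <= n -> r <= k -> free (carc a k) ->
  free [set x | k <= dist a x] -> False.
Proof.
move=> kn rk Fa Fc.
set b := shift a k.-1.
have dab : dist a b = k.-1 by rewrite dist_shift_self //; lia.
have ne : a != b by apply/eqP => E; move: dab; rewrite -E dist_self; lia.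
have p1 : r <= (dist a b).+1 by rewrite dab; lia.
have p2 : free [set x | 0 < dist a x < dist a b].
  by apply: free_sub Fa; apply/subsetP => x; rewrite !inE dab; lia.
have p3 : free [set x | dist a b < dist a x].
  by apply: free_sub Fc; apply/subsetP => x; rewrite !inE dab; lia.
have [e eH [_ _ esub]] := saturation_edge ne p1 p2 p3.
apply: (free_edge eH Fa); apply: subset_trans esub _.
by apply/subsetP => x; rewrite !inE dab; lia.
Qed.

Lemma arc_nfree_compl_free a k : k <= n ->
  (~~ free (carc a k)) = free [set x | k <= dist a x].
Proof.
move=> kn; apply/idP/idP => [/compl_free -> //|Fc]; apply/negP => Fa.
case: (leqP r k) => rk; first exact: (arc_or_compl_nfree kn rk Fa Fc).
have kn' : n - k <= n by lia.
apply: (@arc_or_compl_nfree (shift a k) (n - k) kn'); first by lia.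
- by rewrite -arc_compl.
- by rewrite arc_compl_back.
Qed.

Lemma reach_duality a k : k <= n -> (reach a <= k) = (n - k < reach (shift a k)).
Proof.
move=> kn; rewrite reach_leP arc_nfree_compl_free // arc_compl //.
by rewrite ltnNge reach_leP negbK.
Qed.

Lemma reach_le a : reach a <= n - r + 1.
Proof.
have h : n - r + 1 <= n by lia.
by rewrite reach_duality //; have := reach_ge (shift a (n - r + 1)); lia.
Qed.

Lemma reach_succ a : (reach a).-1 <= reach (shift a 1).
Proof.
set J := reach (shift a 1).
have J1 : J <= n - r + 1 := reach_le _.
have g1 := @reach_duality (shift a 1) J (ltac:(lia)).
rewrite leqnn shiftD add1n in g1.
have g2 := @reach_duality a J.+1 (ltac:(lia)).
case: (leqP (reach a).-1 J) => // hlt.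
by move: g2; rewrite leqNgt (_ : J.+1 < reach a) /=; lia.
Qed.

Lemma is_rho_reach v : is_rho H v (shift v (reach v).-1).
Proof.
set u0 := shift v (reach v).-1.
have Dr := reach_ge v; have Dl := reach_le v.
have du : dist v u0 = (reach v).-1 by rewrite dist_shift_self //; lia.
have Dfree : free (carc v (reach v).-1) by apply: arc_free; lia.
apply/andP; split.
- have ne : v != u0 by apply/eqP => E; move: du; rewrite -E dist_self; lia.
  have p1 : r <= (dist v u0).+1 by rewrite du; lia.
  have p2 : free [set x | 0 < dist v x < dist v u0].
    by apply: free_sub Dfree; apply/subsetP => x; rewrite !inE du; lia.
  have p3 : free [set x | dist v u0 < dist v x].
    apply: free_sub (compl_free (reach_le_n v) (arc_reach_nfree v)).
    by apply/subsetP => x; rewrite !inE du; lia.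
  have [e eH [ve _ esub]] := saturation_edge ne p1 p2 p3.
  by apply/exists_inP; exists e => //; rewrite ve cintE.
- apply/negP => /exists_inP [h hH /andP [vh hsub]].
  apply: (free_edge hH Dfree); apply: subset_trans hsub _; apply/subsetP => x.
  rewrite cintE cpredE !inE (dist_shift v u0 (_ : n' <= n)) // du.
  have := dist_lt v x; case_ifs; lia.
Qed.

Lemma is_rho_uniq v u : is_rho H v u -> u = shift v (reach v).-1.
Proof.
have Dr := reach_ge v; have Dl := reach_le v.
set u0 := shift v (reach v).-1.
have du : dist v u0 = (reach v).-1 by rewrite dist_shift_self //; lia.
case/andP => /exists_inP [h1 h1H /andP [vh1 h1sub]] /exists_inP no_shorter.
apply: (@dist_inj _ v); rewrite du.
have t1 : reach v <= (dist v u).+1.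
  by rewrite reach_leP; apply/nfreeP; exists h1.
case: (leqP (dist v u) (reach v).-1) => hlt; first by lia.
have uv : u != v by apply/eqP => E; move: t1; rewrite E dist_self; lia.
have /andP [/exists_inP [e eH /andP [ve esub]] _] := is_rho_reach v.
exfalso; apply: no_shorter; exists e => //; rewrite ve /=.
apply: subset_trans esub _; apply/subsetP => x.
rewrite !cintE !inE du cpredE (dist_shift v u (_ : n' <= n)) //.
have := dist_lt v u; have : dist v u != 0 by rewrite dist_eq0 eq_sym.
case_ifs; lia.
Qed.

Lemma rhoE v : rho H v = shift v (reach v).-1.
Proof.
rewrite /rho; case: pickP => [u Hu|Hn]; first by rewrite /= (is_rho_uniq Hu).
by move: (Hn (shift v (reach v).-1)); rewrite is_rho_reach.
Qed.

(* [lam v] is the first vertex of the shortest edge-containing arc ending at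
   [v]; by duality it lies just after the longest free arc from [v + 1]. *)
Lemma is_lambda_reach v : is_lambda H v (shift (shift v 1) (reach (shift v 1)).-1).
Proof.
set b := shift v 1; set J := reach b; set u0 := shift b J.-1.
have Jr : r <= J := reach_ge b; have Jl : J <= n - r + 1 := reach_le b.
have dbu : dist b u0 = J.-1 by rewrite dist_shift_self //; lia.
have dbv : dist b v = n' := dist_succ_self v.
have Jfree : free (carc b J.-1) by apply: arc_free; lia.
have Jcompl : free [set x | J <= dist b x].
  exact: compl_free (reach_le_n b) (arc_reach_nfree b).
apply/andP; split.
- have duv : dist u0 v = n - J by rewrite (dist_rebase b u0 v) dbu dbv; case_ifs; lia.
  have ne : u0 != v by apply/eqP => E; move: duv; rewrite E dist_self; lia.
  have p1 : r <= (dist u0 v).+1 by rewrite duv; lia.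
  have p2 : free [set x | 0 < dist u0 x < dist u0 v].
    apply: free_sub Jcompl; apply/subsetP => x; rewrite !inE duv.
    rewrite (dist_rebase b u0 x) dbu; have := dist_lt b x; case_ifs; lia.
  have p3 : free [set x | dist u0 v < dist u0 x].
    apply: free_sub Jfree; apply/subsetP => x; rewrite !inE duv.
    rewrite (dist_rebase b u0 x) dbu; have := dist_lt b x; case_ifs; lia.
  have [e eH [_ ve esub]] := saturation_edge ne p1 p2 p3.
  by apply/exists_inP; exists e => //; rewrite ve cintE.
- apply/negP => /exists_inP [h hH /andP [vh hsub]].
  apply: (free_edge hH Jcompl); apply: subset_trans hsub _; apply/subsetP => x.
  by rewrite csuccE shiftD cint_from_succ -/b !inE dist_shift_self; lia.
Qed.

Lemma is_lambda_uniq v u :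
  is_lambda H v u -> u = shift (shift v 1) (reach (shift v 1)).-1.
Proof.
set b := shift v 1; set J := reach b; set u0 := shift b J.-1.
have Jr : r <= J := reach_ge b; have Jl : J <= n - r + 1 := reach_le b.
have dbu : dist b u0 = J.-1 by rewrite dist_shift_self //; lia.
case/andP => /exists_inP [h1 h1H /andP [vh1 h1sub]] /exists_inP no_shorter.
rewrite cint_from_succ -/b in h1sub.
have hp : dist b u < J.
  have : ~~ free [set x | dist b u <= dist b x] by apply/nfreeP; exists h1.
  by rewrite -arc_nfree_compl_free ?(ltnW (dist_lt _ _)) // negbK ltnNge reach_leP negbK.
apply: (@dist_inj _ b); rewrite dbu.
case: (leqP J.-1 (dist b u)) => hq; first by lia.
have /andP [/exists_inP [e eH /andP [ve esub]] _] := is_lambda_reach v.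
exfalso; apply: no_shorter; exists e => //; rewrite ve /=.
apply: subset_trans esub _.
rewrite !cint_from_succ -/b -/J -/u0 csuccE (@dist_shift _ b u 1) // dbu.
by apply/subsetP => x; rewrite !inE; case_ifs; lia.
Qed.

Lemma lamE v : lam H v = shift v (reach (shift v 1)).
Proof.
have -> : lam H v = shift (shift v 1) (reach (shift v 1)).-1.
  rewrite /lam; case: pickP => [u Hu|Hn]; first by rewrite /= (is_lambda_uniq Hu).
  by move: (Hn (shift (shift v 1) (reach (shift v 1)).-1)); rewrite is_lambda_reach.
by rewrite shiftD; congr (shift v _); have := reach_ge (shift v 1); lia.
Qed.

Lemma lam_neq c : lam H c != c.
Proof.
rewrite lamE; apply/eqP => E.
have Jr := reach_ge (shift c 1); have Jl := reach_le (shift c 1).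
by have := @dist_shift_self _ c (reach (shift c 1)) (ltac:(lia)); rewrite E dist_self; lia.
Qed.

(* Pivots: the vertices whose reach does not drop when moving one step. These
   are the vertices [w_i] of the statement. *)
Definition pivots : {set 'I_n} := [set c | reach c <= reach (shift c 1)].

Lemma pivots_nonempty : exists c, c \in pivots.
Proof.
case: (set_0Vmem pivots) => [P0|[c cP]]; last by exists c.
have step i : reach (shift ord0 i) + i <= reach ord0.
  elim: i => [|i IH]; first by rewrite shift0 addn0.
  have : shift ord0 i \notin pivots by rewrite P0 inE.
  by rewrite inE shiftD addn1 -ltnNge => h; lia.
by have := step n; rewrite shift_n; lia.
Qed.

Lemma reach_lam c : c \in pivots -> reach (lam H c) = n - reach (shift c 1) + 1.
Proof.
rewrite inE lamE => hc.
set J := reach (shift c 1).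
have Jr : r <= J := reach_ge _; have Jl : J <= n - r + 1 := reach_le _.
have g1 := @reach_duality (shift c 1) J.-1 (ltac:(lia)).
rewrite shiftD (_ : 1 + J.-1 = J) in g1; last by lia.
rewrite leqNgt (_ : J.-1 < J) /= in g1; last by lia.
have g2 := @reach_duality c J (ltac:(lia)).
by rewrite hc in g2; lia.
Qed.

Lemma rho_lam c : c \in pivots -> rho H (lam H c) = c.
Proof.
move=> hc; rewrite rhoE (reach_lam hc) lamE shiftD.
have Jr := reach_ge (shift c 1); have Jl := reach_le (shift c 1).
by rewrite (_ : _ + _ = n) ?shift_n //; lia.
Qed.

Lemma lam_pivot c : c \in pivots -> lam H c \in pivots.
Proof.
move=> hc; rewrite [X in X \in pivots]lamE inE -lamE (reach_lam hc) lamE shiftD.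
set J := reach (shift c 1).
have Jr : r <= J := reach_ge _; have Jl : J <= n - r + 1 := reach_le _.
have g := @reach_duality (shift c 1) J (ltac:(lia)).
by rewrite leqnn shiftD add1n in g; rewrite !addn1; lia.
Qed.

Lemma reach_between_pivots c g : 0 < g ->
  (forall i, 0 < i < g -> shift c i \notin pivots) ->
  reach (shift c g) + g = reach (shift c 1) + 1.
Proof.
move=> g0 gap; elim: g g0 gap => [|i IH] // _ gap.
case: (posnP i) => [->|ipos] //.
have := IH ipos (fun j hj => gap j (ltac:(lia))).
have : shift c i \notin pivots by apply: gap; lia.
rewrite inE shiftD addn1 -ltnNge => h.
by have := reach_succ (shift c i); rewrite shiftD addn1; lia.
Qed.

Lemma lam2_next_pivot c : c \in pivots ->
  [/\ lam H (lam H c) \in pivots, lam H (lam H c) != c &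
      forall y, y \in pivots -> ~~ (0 < dist c y < dist c (lam H (lam H c)))].
Proof.
move=> hc.
have ex : exists g, (0 < g) && (shift c g \in pivots) by exists n; rewrite shift_n hc.
case: (ex_minnP ex) => g /andP [g0 gP] gmin.
have gap i : 0 < i < g -> shift c i \notin pivots.
  by move=> /andP [i0 ig]; apply/negP => iP; have := gmin i; rewrite i0 iP /=; lia.
set J := reach (shift c 1); set K := reach (shift c g).
have HK : K + g = J + 1 := reach_between_pivots g0 gap.
have Jr : r <= J := reach_ge _; have Jl : J <= n - r + 1 := reach_le _.
have Kr : r <= K := reach_ge _.
have gn : g < n by lia.
have g1 := @reach_duality (shift c g) K (ltac:(lia)).
rewrite leqnn shiftD (_ : g + K = J.+1) in g1; last by lia.
have g2 := @reach_duality (shift c g.+1) K.-1 (ltac:(lia)).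
rewrite shiftD (_ : g.+1 + K.-1 = J.+1) in g2; last by lia.
move: gP; rewrite inE shiftD addn1 -/K => gP.
rewrite leqNgt (_ : K.-1 < reach (shift c g.+1)) /= in g2; last by lia.
have lam2 : lam H (lam H c) = shift c g.
  rewrite [lam H c]lamE -/J lamE !shiftD addn1 (_ : reach _ = n - K + 1); last by lia.
  by rewrite (_ : J + (n - K + 1) = g + n) -?shiftD ?shift_n //; lia.
rewrite lam2 inE shiftD addn1; split => //.
- by apply/eqP => E; have := dist_shift_self c gn; rewrite E dist_self; lia.
- move=> y yP; rewrite dist_shift_self //; apply/negP => /andP [y0 yg].
  by have := gmin (dist c y); rewrite y0 shift_dist yP /= => /(_ isT); lia.
Qed.

(* A pivot [c] and its image [lam c] are two distinct pivots. *)
Lemma two_pivots : 1 < npts pivots.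
Proof.
have [c cP] := pivots_nonempty.
have : rank pivots (lam H c) != rank pivots c.
  by apply: contra (lam_neq c) => /eqP e; rewrite -(pt_rank (lam_pivot cP)) e pt_rank.
by have := rank_lt cP; have := rank_lt (lam_pivot cP); lia.
Qed.

(* On the ranks of the pivots, [lam] is a square root of the rotation by one;
   hence there are [2l+1] pivots and [lam] advances ranks by [l+1]. *)
Lemma lam_rotates_pivots : exists2 l, npts pivots = (2 * l).+1 &
  forall q, q < npts pivots ->
    lam H (pt pivots q) = pt pivots ((l.+1 + q) %% npts pivots).
Proof.
pose p k := rank pivots (lam H (pt pivots k)).
have pt_piv k : k < npts pivots -> pt pivots k \in pivots := @pt_in _ _ k.
have p_lt k : k < npts pivots -> p k < npts pivots.
  by move=> km; apply/rank_lt/lam_pivot/pt_piv.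
have pt_p k : k < npts pivots -> pt pivots (p k) = lam H (pt pivots k).
  by move=> km; rewrite pt_rank //; apply/lam_pivot/pt_piv.
have p_sq k : k < npts pivots -> p (p k) = k.+1 %% npts pivots.
  move=> km; have [nxt nxt_ne nxt_first] := lam2_next_pivot (pt_piv k km).
  by rewrite /p pt_p // (rank_next (pt_piv k km) nxt nxt_ne nxt_first) rank_pt.
have [l ml pE] := rotation_square_root two_pivots p_lt p_sq.
by exists l => // q qm; rewrite -pt_p // pE.
Qed.

Lemma pivot_cycle : exists (l : nat) (w : 'I_(2 * l).+1 -> 'I_n),
  [/\ 1 <= l, injective w, cyc_ordered (odd_even_seq w),
      (forall i, lam H (w i) = w (ordS i))
    & (forall i, rho H (w i) = w (ord_pred i))].
Proof.
have [l ml lam_pt] := lam_rotates_pivots.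
have lam_w := stride_step ml lam_pt.
exists l, (@stride _ pivots l); split.
- by have := two_pivots; rewrite ml; lia.
- exact: stride_inj.
- by exists 0; rewrite rot0 odd_even_stride //; apply: pvals_sorted.
- exact: lam_w.
- move=> i; rewrite -{1}(ord_predK i) -lam_w rho_lam //.
  by apply: pt_in; rewrite ltn_pmod // ml.
Qed.

End SaturatedHypergraph.

(* An empty vertex set is excluded by [2r <= n]. *)
Theorem lemma3p6 (r n : nat) (H : {set {set 'I_n}}) :
  2 <= r -> 2 * r <= n ->
  (forall h, h \in H -> #|h| = r) ->
  M1_saturated r H ->
  exists (l : nat) (w : 'I_(2 * l).+1 -> 'I_n),
    [/\ 1 <= l, injective w,
        cyc_ordered (odd_even_seq w),
        (forall i, lam H (w i) = w (ordS i))
      & (forall i, rho H (w i) = w (ord_pred i))].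
Proof.
case: n H => [|n'] H r_ge2 n_ge2r edge_card saturated; first by lia.
exact: pivot_cycle r_ge2 n_ge2r edge_card saturated.
Qed.
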